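(* For each $\nu=1,\dots,5$, the polynomial $j_\nu(H_1,\dots,H_5)$ (defined in the context below) is not identically zero.
   Context: Identify $\mathbb M^{2\times 2}\cong\mathbb R^4$ via $(x_{ij})\mapsto(x_{11},x_{21},x_{12},x_{22})^T$ and $\mathbb M^{4\times 2}\cong\mathbb R^8$ via $(x_{ij})\mapsto(x_{11},x_{21},x_{31},x_{41},x_{12},x_{22},x_{32},x_{42})^T$. With $I=I_2$, $O=O_2$, let $P=\begin{pmatrix}I&O&O&O\\ O&O&I&O\end{pmatrix}$ and $E=\begin{pmatrix}O&O&O&I\\ O&-I&O&O\end{pmatrix}$ (both $4\times 8$), so that for $X=\begin{bmatrix}A\\ B\end{bmatrix}\in\mathbb M^{4\times 2}$ one has $A=PX$ and $BJ=EX$, where $J=\begin{pmatrix}0&-1\\ 1&0\end{pmatrix}$. Parameters: $Y=(z_1,y_2,z_3,z_4,y_5,p_3,p_4,p_5,q_4,q_5,\kappa_1,\dots,\kappa_5)\in\mathbb R^{20}$ with $p_j,q_j\in\mathbb R^2$. Set $\delta^0=(1,1)$, $\alpha_1=(-1,z_1)$, $\alpha_2=(y_2,-1)$, $\alpha_3=(1,z_3)$, $\alpha_4=(1,z_4)$, $\alpha_5=(y_5,1)$, and $p_1=\frac{y_2z_3+1}{1-y_2z_1}p_3+\frac{y_2z_4+1}{1-y_2z_1}p_4+\frac{y_2+y_5}{1-y_2z_1}p_5$, $p_2=\frac{z_1+z_3}{1-y_2z_1}p_3+\frac{z_1+z_4}{1-y_2z_1}p_4+\frac{y_5z_1+1}{1-y_2z_1}p_5$,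 $q_1=\frac{(y_2 z_4 + 1)(z_3 - z_4)}{(z_1 + z_3)(y_2z_1 - 1)}q_4+\frac{(y_2 + y_5)(y_5z_3 - 1)}{(z_1 + z_3)(y_2z_1 - 1)}q_5$, $q_2=-\frac{(z_1 + z_4)(z_3 - z_4)}{(y_2z_1 - 1)(y_2z_3 + 1)}q_4-\frac{(y_5z_1 + 1)(y_5z_3 - 1)}{(y_2z_1 - 1)(y_2z_3 + 1)}q_5$, $q_3=-\frac{(z_1 + z_4)(y_2z_4 + 1)}{(z_1 + z_3)(y_2z_3 + 1)}q_4-\frac{(y_2 + y_5)(y_5z_1 + 1)}{(z_1 + z_3)(y_2z_3 + 1)}q_5$. Let $C_j(Y)=\begin{pmatrix}p_j\\ (\alpha_j\cdot\delta^0)q_j\end{pmatrix}\otimes\alpha_j\in\mathbb M^{4\times 2}$ and, with all indices taken modulo 5, $Z^\nu_1=\kappa_\nu C_\nu$, $Z^\nu_k=C_\nu+\dots+C_{\nu+k-2}+\kappa_{\nu+k-1}C_{\nu+k-1}$ for $k=2,\dots,5$. Let $Y^0=(0,0,1,4,2,(1,0),(1,1),(0,1),(-19,0),(-63,-82),2,3,4,3,2)\in\mathbb R^{20}$. For symmetric $4\times4$ matrices $H_1,\dots,H_5$, define $j_\nu(H_1,\dots,H_5)$ as the determinant of the $20\times 20$ matrix whose $k$-th $4\times 20$ block row ($k=1,\dots,5$) is $(H_{\nu+k-1}P+E)\,\frac{\partial Z^\nu_k}{\partial Y}(Y^0)$, where indices are mod 5 and $\frac{\partial Z^\nu_k}{\partial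 Y}$ is the $8\times 20$ Jacobian. (In the paper this is $\det\frac{\partial\Psi^\nu}{\partial Y}(Y^0,P^0_\nu)$, where $\Psi^\nu(Y,Q)=(\Phi(Q+Z^\nu_1(Y)),\dots,\Phi(Q+Z^\nu_5(Y)))$, $\Phi(X)=DF(A)+BJ$, and $H_j=D^2F(A^0_j)$; it is a polynomial in $(H_1,\dots,H_5)$ independent of $F$.) *)

From Stdlib Require Import Reals.
From mathcomp Require Import all_boot all_order all_algebra.
From mathcomp Require Import Rstruct.
From Coquelicot Require Derive.

Set Implicit Arguments.
Unset Strict Implicit.
Unset Printing Implicit Defensive.

(* layout: 0:z1 1:y2 2:z3 3:z4 4:y5 5,6:p3 7,8:p4 9,10:p5 11,12:q4 13,14:q5
           15..19: kappa_1..kappa_5 *)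
Definition Yvec := 'I_20 -> R.

Definition yc (Y : Yvec) (k : nat) : R := Y (inord k).

Definition z1 Y := yc Y 0.
Definition y2 Y := yc Y 1.
Definition z3 Y := yc Y 2.
Definition z4 Y := yc Y 3.
Definition y5 Y := yc Y 4.

Local Open Scope R_scope.

Definition vadd (u v : R * R) : R * R := (fst u + fst v, snd u + snd v).
Definition vscal (a : R) (u : R * R) : R * R := (a * fst u, a * snd u).

Definition p3 Y : R * R := (yc Y 5, yc Y 6).
Definition p4 Y : R * R := (yc Y 7, yc Y 8).
Definition p5 Y : R * R := (yc Y 9, yc Y 10).
Definition q4 Y : R * R := (yc Y 11, yc Y 12).
Definition q5 Y : R * R := (yc Y 13, yc Y 14).
(* kappa_{j+1} for j = 0..4 *)
Definition kappa Y (j : nat) : R := yc Y (15 + j).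

Definition p1 Y : R * R :=
  vadd (vscal ((y2 Y * z3 Y + 1) / (1 - y2 Y * z1 Y)) (p3 Y))
  (vadd (vscal ((y2 Y * z4 Y + 1) / (1 - y2 Y * z1 Y)) (p4 Y))
        (vscal ((y2 Y + y5 Y) / (1 - y2 Y * z1 Y)) (p5 Y))).

Definition p2 Y : R * R :=
  vadd (vscal ((z1 Y + z3 Y) / (1 - y2 Y * z1 Y)) (p3 Y))
  (vadd (vscal ((z1 Y + z4 Y) / (1 - y2 Y * z1 Y)) (p4 Y))
        (vscal ((y5 Y * z1 Y + 1) / (1 - y2 Y * z1 Y)) (p5 Y))).

Definition q1 Y : R * R :=
  vadd (vscal ((y2 Y * z4 Y + 1) * (z3 Y - z4 Y)
                 / ((z1 Y + z3 Y) * (y2 Y * z1 Y - 1))) (q4 Y))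
       (vscal ((y2 Y + y5 Y) * (y5 Y * z3 Y - 1)
                 / ((z1 Y + z3 Y) * (y2 Y * z1 Y - 1))) (q5 Y)).

Definition q2 Y : R * R :=
  vadd (vscal (- ((z1 Y + z4 Y) * (z3 Y - z4 Y)
                 / ((y2 Y * z1 Y - 1) * (y2 Y * z3 Y + 1)))) (q4 Y))
       (vscal (- ((y5 Y * z1 Y + 1) * (y5 Y * z3 Y - 1)
                 / ((y2 Y * z1 Y - 1) * (y2 Y * z3 Y + 1)))) (q5 Y)).

Definition q3 Y : R * R :=
  vadd (vscal (- ((z1 Y + z4 Y) * (y2 Y * z4 Y + 1)
                 / ((z1 Y + z3 Y) * (y2 Y * z3 Y + 1)))) (q4 Y))
       (vscal (- ((y2 Y + y5 Y) * (y5 Y * z1 Y + 1)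
                 / ((z1 Y + z3 Y) * (y2 Y * z3 Y + 1)))) (q5 Y)).

(* index j = 0..4 stands for the paper's index j+1 *)
Definition pj Y (j : nat) : R * R :=
  match j with 0 => p1 Y | 1 => p2 Y | 2 => p3 Y | 3 => p4 Y | _ => p5 Y end.
Definition qj Y (j : nat) : R * R :=
  match j with 0 => q1 Y | 1 => q2 Y | 2 => q3 Y | 3 => q4 Y | _ => q5 Y end.
Definition alpha Y (j : nat) : R * R :=
  match j with
  | 0 => (-1, z1 Y)
  | 1 => (y2 Y, -1)
  | 2 => (1, z3 Y)
  | 3 => (1, z4 Y)
  | _ => (y5 Y, 1)
  end.
Definition delta0 : R * R := (1, 1).
Definition dot2 (u v : R * R) : R := fst u * fst v + snd u * snd v.

Definition cvec Y (j : nat) (i : nat) : R :=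
  match i with
  | 0 => fst (pj Y j)
  | 1 => snd (pj Y j)
  | 2 => dot2 (alpha Y j) delta0 * fst (qj Y j)
  | _ => dot2 (alpha Y j) delta0 * snd (qj Y j)
  end.
Definition comp2 (u : R * R) (l : nat) : R := if l is 0 then fst u else snd u.

Close Scope R_scope.
Local Open Scope ring_scope.

(* C_{j+1}(Y) = (p ; (alpha.delta0) q) ⊗ alpha  (rank-one 4x2 matrix a b^T) *)
Definition Cmat (Y : Yvec) (j : nat) : 'M[R]_(4, 2) :=
  \matrix_(i < 4, l < 2) (cvec Y j i * comp2 (alpha Y j) l)%R.

(* Z^{nu+1}_{k+1}(Y), nu, k in 0..4, indices mod 5 *)
Definition Zmat (Y : Yvec) (nu k : nat) : 'M[R]_(4, 2) :=
  \sum_(m < k) Cmat Y ((nu + m) %% 5)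
  + kappa Y ((nu + k) %% 5) *: Cmat Y ((nu + k) %% 5).

(* identification M^{4x2} = R^8, column-major *)
Definition vec8 (X : 'M[R]_(4, 2)) (r : nat) : R :=
  X (inord (r %% 4)) (inord (r %/ 4)).

Definition Y0list : seq R :=
  [:: 0; 0; 1; 4; 2; 1; 0; 1; 1; 0; 1; (-19)%R; 0; (-63)%R; (-82)%R;
      2; 3; 4; 3; 2].
Definition Y0 : Yvec := fun i => nth 0 Y0list i.

Definition setY (Y : Yvec) (c : 'I_20) (t : R) : Yvec :=
  fun i => if i == c then t else Y i.
Definition pderiv (f : Yvec -> R) (Y : Yvec) (c : 'I_20) : R :=
  Derive.Derive (fun t => f (setY Y c t)) (Y c).

Definition DZ (nu k : nat) : 'M[R]_(8, 20) :=
  \matrix_(r < 8, c < 20) pderiv (fun Y => vec8 (Zmat Y nu k) r) Y0 c.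

Definition blk (b : nat) : 'M[R]_2 :=
  match b with 0 => 0 | 1 => 1%:M | _ => - 1%:M end.
(* P = (I O O O ; O O I O),  E = (O O O I ; O -I O O) *)
Definition Pblk (bi bj : nat) : nat :=
  match bi, bj with 0, 0 => 1 | 1, 2 => 1 | _, _ => 0 end.
Definition Eblk (bi bj : nat) : nat :=
  match bi, bj with 0, 3 => 1 | 1, 1 => 2 | _, _ => 0 end.
Definition Pmx : 'M[R]_(4, 8) :=
  \matrix_(i < 4, j < 8) blk (Pblk (i %/ 2) (j %/ 2)) (inord (i %% 2)) (inord (j %% 2)).
Definition Emx : 'M[R]_(4, 8) :=
  \matrix_(i < 4, j < 8) blk (Eblk (i %/ 2) (j %/ 2)) (inord (i %% 2)) (inord (j %% 2)).

(* j_{nu+1}(H_1,...,H_5): H i stands for H_{i+1}; block row k+1 is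
   (H_{nu+k} P + E) dZ^nu_k/dY (Y0) (paper indices, mod 5) *)
Definition jnu (nu : 'I_5) (H : 'I_5 -> 'M[R]_4) : R :=
  \det (\matrix_(r < 20, c < 20)
          (((H (inord ((nu + r %/ 4) %% 5)) *m Pmx + Emx) *m DZ nu (r %/ 4))
             (inord (r %% 4)) c)).

From Stdlib Require Import Reals QArith Qreals RMicromega.
From Coquelicot Require Import Coquelicot.
From mathcomp Require Import all_boot all_order all_algebra.
From mathcomp Require Import Rstruct.

(* Take H_1 = ... = H_5 = I.  Then j_nu is the determinant of an explicit 20x20 real
   matrix whose k-th block row is (P + E) times the Jacobian of Z^nu_k at Y^0.  That
   Jacobian consists of partial derivatives of rational functions of Y at an integral
   point, so its entries are rational; we compute them exactly by reflection (a syntax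
   of rational expressions with a formal derivative, evaluated in Q).  Each of the five
   matrices A is then shown invertible by a certificate: a rational matrix B and a
   rational d <> 0, found by Gauss-Jordan elimination, with A B = d I in exact
   arithmetic. *)

Import GRing.Theory.

Local Close Scope Q_scope.
Local Open Scope nat_scope.

Inductive rexpr : Type :=
  | RVar of nat
  | RConst of Z
  | RAdd of rexpr & rexpr
  | RMul of rexpr & rexpr
  | ROpp of rexpr
  | RInv of rexpr.

Fixpoint eval_R (Y : Yvec) (e : rexpr) : R :=
  match e with
  | RVar n => yc Y n
  | RConst z => IZR z
  | RAdd a b => Rplus (eval_R Y a) (eval_R Y b)
  | RMul a b => Rmult (eval_R Y a) (eval_R Y b)
  | ROpp a => Ropp (eval_R Y a)
  | RInv a => Rinv (eval_R Y a)
  end.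

Fixpoint defined_R (Y : Yvec) (e : rexpr) : Prop :=
  match e with
  | RVar _ | RConst _ => True
  | RAdd a b | RMul a b => defined_R Y a /\ defined_R Y b
  | ROpp a => defined_R Y a
  | RInv a => defined_R Y a /\ eval_R Y a <> R0
  end.

(* [yc Y n] reads coordinate [inord n], which is coordinate 0 when [n >= 20].  [coord]
   computes that index without [inord], which [vm_compute] cannot reduce (its proof
   goes through the opaque [idP]). *)
Definition coord (n : nat) : nat := if n < 20 then n else 0.

Lemma inord_coord n : (@inord 19 n : nat) = coord n.
Proof.
rewrite /coord; case: ltnP => [/inordK //|n20].
by rewrite /inord /insubd insubF // ltnNge n20.
Qed.

Fixpoint deriv (c : nat) (e : rexpr) : rexpr :=
  match e with
  | RVar n => RConst (Z.b2z (coord n == c))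
  | RConst _ => RConst 0
  | RAdd a b => RAdd (deriv c a) (deriv c b)
  | RMul a b => RAdd (RMul (deriv c a) b) (RMul a (deriv c b))
  | ROpp a => ROpp (deriv c a)
  | RInv a => ROpp (RMul (deriv c a) (RInv (RMul a a)))
  end.

Lemma eval_R_setY_id Y c e : eval_R (setY Y c (Y c)) e = eval_R Y e.
Proof.
elim: e => //= [n|a -> b ->|a -> b ->|a ->|a ->] //.
by rewrite /yc /setY; case: eqP => // ->.
Qed.

Lemma is_derive_eval_R Y (c : 'I_20) e : defined_R Y e ->
  is_derive (fun t => eval_R (setY Y c t) e) (Y c) (eval_R Y (deriv c e)).
Proof.
elim: e => /= [n _|z _|a IHa b IHb [da db]|a IHa b IHb [da db]|a IHa da|a IHa [da na]].
- rewrite /yc /setY -val_eqE /= inord_coord; case: eqP => _.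
  + exact: (@is_derive_id R_AbsRing).
  + exact: (@is_derive_const R_AbsRing R_NormedModule).
- exact: (@is_derive_const R_AbsRing R_NormedModule).
- exact: is_derive_plus (IHa da) (IHb db).
- have := is_derive_mult _ _ _ _ _ (IHa da) (IHb db) Rmult_comm.
  by rewrite !eval_R_setY_id.
- exact: is_derive_opp (IHa da).
- have := is_derive_inv _ _ _ (IHa da); rewrite eval_R_setY_id => /(_ na).
  by rewrite Rdiv_opp_l /Rdiv /pow Rmult_1_r.
Qed.

Fixpoint eval_Q (v : nat -> Q) (e : rexpr) : Q :=
  match e with
  | RVar n => v n
  | RConst z => inject_Z z
  | RAdd a b => Qplus (eval_Q v a) (eval_Q v b)
  | RMul a b => Qmult (eval_Q v a) (eval_Q v b)
  | ROpp a => Qopp (eval_Q v a)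
  | RInv a => Qinv (eval_Q v a)
  end.

Fixpoint defined_Q (v : nat -> Q) (e : rexpr) : bool :=
  match e with
  | RVar _ | RConst _ => true
  | RAdd a b | RMul a b => defined_Q v a && defined_Q v b
  | ROpp a => defined_Q v a
  | RInv a => defined_Q v a && ~~ Qeq_bool (eval_Q v a) 0
  end.

Lemma Q2R_inject_Z z : Q2R (inject_Z z) = IZR z.
Proof. by rewrite /Q2R /= Rinv_1 ?Rmult_1_r. Qed.

Section RationalPoint.

Variables (Y : Yvec) (v : nat -> Q).
Hypothesis yc_v : forall n, yc Y n = Q2R (v n).

(* No definedness is needed: both [Rinv] and [Qinv] send 0 to 0. *)
Lemma eval_R_Q e : eval_R Y e = Q2R (eval_Q v e).
Proof.
elim: e => /= [n|z|a -> b ->|a -> b ->|a ->|a ->].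
- exact: yc_v.
- by rewrite Q2R_inject_Z.
- by rewrite Q2R_plus.
- by rewrite Q2R_mult.
- by rewrite Q2R_opp.
- rewrite Q2R_inv_ext; case E: Qeq_bool => //.
  by rewrite (Qeq_true _ _ E) Q2R_0 Rinv_0.
Qed.

Lemma defined_R_Q e : defined_Q v e -> defined_R Y e.
Proof.
elim: e => //= [a IHa b IHb|a IHa b IHb|a IHa].
- by case/andP=> /IHa ? /IHb.
- by case/andP=> /IHa ? /IHb.
- by case/andP=> /IHa ? /negbTE/Qeq_false; rewrite -eval_R_Q Q2R_0.
Qed.

Lemma pderiv_eval_Q (c : 'I_20) e : defined_Q v e ->
  pderiv (eval_R^~ e) Y c = Q2R (eval_Q v (deriv c e)).
Proof.
move=> /defined_R_Q /(@is_derive_eval_R Y c e) /is_derive_unique.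
by rewrite /pderiv => ->; rewrite eval_R_Q.
Qed.

End RationalPoint.

Definition one_e := RConst 1.
Definition RSub a b := RAdd a (ROpp b).
Definition RDiv a b := RMul a (RInv b).
Definition z1_e := RVar 0.
Definition y2_e := RVar 1.
Definition z3_e := RVar 2.
Definition z4_e := RVar 3.
Definition y5_e := RVar 4.

Definition p_e (j l : nat) : rexpr :=
  let comb a3 a4 a5 :=
    RAdd (RMul a3 (RVar (5 + l)))
      (RAdd (RMul a4 (RVar (7 + l))) (RMul a5 (RVar (9 + l)))) in
  let den := RSub one_e (RMul y2_e z1_e) in
  match j with
  | 0 => comb (RDiv (RAdd (RMul y2_e z3_e) one_e) den)
              (RDiv (RAdd (RMul y2_e z4_e) one_e) den)
              (RDiv (RAdd y2_e y5_e) den)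
  | 1 => comb (RDiv (RAdd z1_e z3_e) den)
              (RDiv (RAdd z1_e z4_e) den)
              (RDiv (RAdd (RMul y5_e z1_e) one_e) den)
  | 2 => RVar (5 + l)
  | 3 => RVar (7 + l)
  | _ => RVar (9 + l)
  end.

Definition q_e (j l : nat) : rexpr :=
  let comb a4 a5 := RAdd (RMul a4 (RVar (11 + l))) (RMul a5 (RVar (13 + l))) in
  match j with
  | 0 => let den := RMul (RAdd z1_e z3_e) (RSub (RMul y2_e z1_e) one_e) in
         comb (RDiv (RMul (RAdd (RMul y2_e z4_e) one_e) (RSub z3_e z4_e)) den)
              (RDiv (RMul (RAdd y2_e y5_e) (RSub (RMul y5_e z3_e) one_e)) den)
  | 1 => let den := RMul (RSub (RMul y2_e z1_e) one_e) (RAdd (RMul y2_e z3_e) one_e) in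
         comb (ROpp (RDiv (RMul (RAdd z1_e z4_e) (RSub z3_e z4_e)) den))
              (ROpp (RDiv (RMul (RAdd (RMul y5_e z1_e) one_e)
                                (RSub (RMul y5_e z3_e) one_e)) den))
  | 2 => let den := RMul (RAdd z1_e z3_e) (RAdd (RMul y2_e z3_e) one_e) in
         comb (ROpp (RDiv (RMul (RAdd z1_e z4_e) (RAdd (RMul y2_e z4_e) one_e)) den))
              (ROpp (RDiv (RMul (RAdd y2_e y5_e) (RAdd (RMul y5_e z1_e) one_e)) den))
  | 3 => RVar (11 + l)
  | _ => RVar (13 + l)
  end.

Definition alpha_e (j l : nat) : rexpr :=
  match j with
  | 0 => if l is 0 then RConst (Zneg 1) else z1_e
  | 1 => if l is 0 then y2_e else RConst (Zneg 1)
  | 2 => if l is 0 then one_e else z3_e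
  | 3 => if l is 0 then one_e else z4_e
  | _ => if l is 0 then y5_e else one_e
  end.

Definition cvec_e (j i : nat) : rexpr :=
  let dot := RAdd (RMul (alpha_e j 0) one_e) (RMul (alpha_e j 1) one_e) in
  match i with
  | 0 => p_e j 0
  | 1 => p_e j 1
  | 2 => RMul dot (q_e j 0)
  | _ => RMul dot (q_e j 1)
  end.

Definition Cmat_e (j i l : nat) : rexpr := RMul (cvec_e j i) (alpha_e j l).

Definition rsum (s : seq rexpr) : rexpr := foldr RAdd (RConst 0) s.

Arguments rsum : simpl never.

Definition Zmat_e (nu k i l : nat) : rexpr :=
  RAdd (rsum [seq Cmat_e ((nu + m) %% 5) i l | m <- index_iota 0 k])
       (RMul (RVar (15 + (nu + k) %% 5)) (Cmat_e ((nu + k) %% 5) i l)).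

Local Open Scope ring_scope.

Lemma eval_Cmat_e Y j i l :
  eval_R Y (Cmat_e j i l) = cvec Y j i * comp2 (alpha Y j) l.
Proof. by case: j => [|[|[|[|j]]]]; case: i => [|[|[|i]]]; case: l. Qed.

Lemma eval_rsum Y s : eval_R Y (rsum s) = \sum_(e <- s) eval_R Y e.
Proof. by elim: s => [|e s IH]; rewrite ?big_nil ?big_cons //= IH. Qed.

Lemma eval_Zmat_e Y nu k i l :
  eval_R Y (Zmat_e nu k i l) =
  \sum_(m < k) eval_R Y (Cmat_e ((nu + m) %% 5) i l)
  + kappa Y ((nu + k) %% 5) * eval_R Y (Cmat_e ((nu + k) %% 5) i l).
Proof. by rewrite /= eval_rsum big_map big_mkord. Qed.

Lemma vec8_Zmat Y nu k r : (r < 8)%N ->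
  vec8 (Zmat Y nu k) r = eval_R Y (Zmat_e nu k (r %% 4) (r %/ 4)).
Proof.
move=> r8; have r4 : (r %% 4 < 4)%N by rewrite ltn_mod.
have r2 : (r %/ 4 < 2)%N by rewrite ltn_divLR.
rewrite eval_Zmat_e /vec8 /Zmat !mxE summxE.
congr (_ + _); last by rewrite eval_Cmat_e !inordK.
by apply: eq_bigr => m _; rewrite mxE eval_Cmat_e !inordK.
Qed.

Local Open Scope Z_scope.
Definition Y0_Z : seq Z :=
  [:: 0; 0; 1; 4; 2; 1; 0; 1; 1; 0; 1; -19; 0; -63; -82; 2; 3; 4; 3; 2].
Local Close Scope Z_scope.

Lemma Y0listE : Y0list = map IZR Y0_Z.
Proof. by rewrite /Y0list /=; do !congr (_ :: _); rewrite ?IZR_NEG ?RoppE IZRposE INRE. Qed.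

Definition Y0_Q (n : nat) : Q := inject_Z (nth Z0 Y0_Z (coord n)).

Lemma yc_Y0 n : yc Y0 n = Q2R (Y0_Q n).
Proof. by rewrite /yc /Y0 /Y0_Q Y0listE Q2R_inject_Z -inord_coord (nth_map Z0). Qed.

Local Open Scope Q_scope.

Definition sumQ (s : seq nat) (F : nat -> Q) : Q := foldr (fun i acc => F i + acc) 0 s.

Definition mulQ m n p (A B : seq (seq Q)) : seq (seq Q) :=
  [seq [seq sumQ (index_iota 0 n) (fun k => nth 0 (nth [::] A i) k * nth 0 (nth [::] B k) j)
       | j <- iota 0 p] | i <- iota 0 m].

Definition is_scalarQ n (d : Q) (A : seq (seq Q)) : bool :=
  all (fun i => all (fun j =>
    Qeq_bool (nth 0 (nth [::] A i) j) (if i == j then d else 0)) (iota 0 n)) (iota 0 n).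

(* Unverified Gauss-Jordan elimination: [scaled_inverse] only proposes an integral
   multiple [B] of the inverse, and [det_mxQ_neq0] checks the proposal. *)
Definition gauss_jordan_step (k : nat) (M : seq (seq Q)) : seq (seq Q) :=
  let nonzero r := ~~ Qeq_bool (nth 0 r k) 0 in
  let p := (k + find nonzero (drop k M))%N in
  let pivot := [seq Qred (x / nth 0 (nth [::] M p) k) | x <- nth [::] M p] in
  [seq if i == k then pivot else
       let r := nth [::] M (if i == p then k else i) in
       [seq Qred (x.1 - nth 0 r k * x.2) | x <- zip r pivot]
  | i <- iota 0 (size M)].

Definition invQ n (A : seq (seq Q)) : seq (seq Q) :=
  let augmented :=
    [seq nth [::] A i ++ [seq if i == j then 1 else 0 | j <- iota 0 n] | i <- iota 0 n] in
  [seq drop n r | r <- foldl (fun M k => gauss_jordan_step k M) augmented (iota 0 n)].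

Definition common_den (M : seq (seq Q)) : Z :=
  foldr (fun x d => Z.lcm (Zpos (Qden x)) d) Z.one (flatten M).

Definition scaled_inverse n (A : seq (seq Q)) : seq (seq Q) * Q :=
  let M := invQ n A in
  let d := inject_Z (common_den M) in
  ([seq [seq Qred (x * d) | x <- r] | r <- M], d).

Definition mxQ m n (A : seq (seq Q)) : 'M[R]_(m, n) :=
  \matrix_(i < m, j < n) Q2R (nth 0 (nth [::] A i) j).

Local Close Scope Q_scope.

Lemma Q2R_sumQ s F : Q2R (sumQ s F) = \sum_(i <- s) Q2R (F i).
Proof.
elim: s => [|i s IH]; first by rewrite big_nil Q2R_0.
by rewrite big_cons /= Q2R_plus IH.
Qed.

Lemma mxQ_mul m n p A B : mxQ m n A *m mxQ n p B = mxQ m p (mulQ m n p A B).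
Proof.
apply/matrixP => i j; rewrite !mxE !(nth_map 0%N) ?size_iota // !nth_iota //.
rewrite Q2R_sumQ big_mkord.
by apply: eq_bigr => k _; rewrite !mxE Q2R_mult.
Qed.

Lemma mxQ_scalar n d A : is_scalarQ n d A -> mxQ n n A = (Q2R d)%:M.
Proof.
move=> /allP scalarA; apply/matrixP => i j; rewrite !mxE.
have := scalarA i; rewrite mem_iota ltn_ord => /(_ isT)/allP/(_ j).
rewrite mem_iota ltn_ord => /(_ isT)/Qeq_true ->.
by rewrite -val_eqE; case: eqP; rewrite ?Q2R_0.
Qed.

Lemma det_mxQ_neq0 {n A B d} :
  ~~ Qeq_bool d 0 -> is_scalarQ n d (mulQ n n n A B) -> \det (mxQ n n A) != 0.
Proof.
move=> /negbTE/Qeq_false; rewrite Q2R_0 => /eqP d_neq0 /mxQ_scalar.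
rewrite -mxQ_mul => AB.
have : mxQ n n A *m ((Q2R d)^-1 *: mxQ n n B) = 1%:M.
  by rewrite -scalemxAr AB scale_scalar_mx mulVf.
by case/mulmx1_unit => unitA _; rewrite -unitfE -unitmxE.
Qed.

Local Open Scope Z_scope.
Definition blk_coef (b : nat) : Z := match b with 0%N => 0 | 1%N => 1 | _ => -1 end.
Local Close Scope Z_scope.

Lemma blkE b : blk b = (IZR (blk_coef b))%:M.
Proof.
by case: b => [|[|b]]; apply/matrixP => i j; rewrite !mxE !mulrb; case: (i == j); rewrite ?oppr0.
Qed.

Definition PE_coef (i j : nat) : Z :=
  if (i %% 2 == j %% 2)%N
  then Z.add (blk_coef (Pblk (i %/ 2)%N (j %/ 2)%N)) (blk_coef (Eblk (i %/ 2)%N (j %/ 2)%N))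
  else Z0.

Definition PE_Q : seq (seq Q) :=
  [seq [seq inject_Z (PE_coef i j) | j <- iota 0 8] | i <- iota 0 4].

Lemma PE_mxQ : Pmx + Emx = mxQ 4 8 PE_Q.
Proof.
apply/matrixP => i j; rewrite !mxE !blkE !mxE !(nth_map 0%N) ?size_iota // !nth_iota //.
have -> : (inord (i %% 2) == inord (j %% 2) :> 'I_2) = (i %% 2 == j %% 2)%N.
  by rewrite -val_eqE /= !inordK ?ltn_mod.
by rewrite Q2R_inject_Z /PE_coef; case: (_ == _); rewrite ?plus_IZR ?RplusE ?mulr1n ?mulr0n ?addr0.
Qed.

Definition DZ_Q (nu k : nat) : seq (seq Q) :=
  [seq [seq eval_Q Y0_Q (deriv c (Zmat_e nu k (r %% 4)%N (r %/ 4)%N)) | c <- iota 0 20]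
  | r <- iota 0 8].

Definition DZ_defined (nu k : nat) : bool :=
  all (fun r => defined_Q Y0_Q (Zmat_e nu k (r %% 4)%N (r %/ 4)%N)) (iota 0 8).

Lemma DZ_mxQ nu k : DZ_defined nu k -> DZ nu k = mxQ 8 20 (DZ_Q nu k).
Proof.
move=> /allP defined; apply/matrixP => r c.
rewrite !mxE !(nth_map 0%N) ?size_iota // !nth_iota // !add0n.
rewrite -(@pderiv_eval_Q _ _ yc_Y0 c); last by apply: defined; rewrite mem_iota ltn_ord.
by rewrite /pderiv; apply: Derive_ext => t; rewrite vec8_Zmat.
Qed.

Definition stack_blocks (h n : nat) (blocks : seq (seq (seq Q))) : seq (seq Q) :=
  [seq nth [::] (nth [::] blocks (r %/ h)%N) (r %% h)%N | r <- iota 0 n].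

Definition jmat_Q (nu : nat) : seq (seq Q) :=
  stack_blocks 4 20 [seq mulQ 4 8 20 PE_Q (DZ_Q nu k) | k <- iota 0 5].

Lemma jnu_id_mxQ (nu : 'I_5) : all (DZ_defined nu) (iota 0 5) ->
  jnu nu (fun=> 1%:M) = \det (mxQ 20 20 (jmat_Q nu)).
Proof.
move=> /allP defined; rewrite /jnu; congr (\det _); apply/matrixP => r c.
have r4 : (r %/ 4 < 5)%N by rewrite ltn_divLR.
rewrite mxE mul1mx PE_mxQ DZ_mxQ ?defined ?mem_iota // mxQ_mul !mxE inordK ?ltn_mod //.
rewrite /jmat_Q /stack_blocks (nth_map 0%N) ?size_iota // nth_iota // add0n.
by rewrite (nth_map 0%N) ?size_iota // nth_iota.
Qed.

Local Open Scope Q_scope.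

(* Evaluated once, when the definition is elaborated: proof checking only verifies
   the products below. *)
Definition jmat_certificates : seq (seq (seq Q) * Q) :=
  Eval vm_compute in [seq scaled_inverse 20 (jmat_Q nu) | nu <- iota 0 5].

Definition jnu_certificate (nu : nat) : bool :=
  let: (B, d) := nth ([::], 0) jmat_certificates nu in
  [&& all (DZ_defined nu) (iota 0 5), ~~ Qeq_bool d 0
    & is_scalarQ 20 d (mulQ 20 20 20 (jmat_Q nu) B)].

Local Close Scope Q_scope.

Lemma jnu_certificates : all jnu_certificate (iota 0 5).
Proof. by vm_compute. Qed.

Lemma jnu_id_neq0 (nu : 'I_5) : jnu nu (fun=> 1%:M) != 0.
Proof.
have := allP jnu_certificates nu; rewrite mem_iota ltn_ord /jnu_certificate => /(_ isT).
case: nth => B d /and3P[defined d_neq0 AB].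
by rewrite jnu_id_mxQ // (det_mxQ_neq0 d_neq0 AB).
Qed.

Theorem lemma4p1 :
  forall nu : 'I_5,
    exists H : 'I_5 -> 'M[R]_4,
      (forall i, (H i)^T = H i) /\ jnu nu H <> 0.
Proof.
move=> nu; exists (fun=> 1%:M); split=> [i|]; first exact: trmx1.
exact/eqP/jnu_id_neq0.
Qed.
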